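(* A ternary matrix $M$ is a (strong) lonesum matrix if and only if each of its $2\times 2$ submatrices is equivalent to a matrix of one of the forms $$\begin{pmatrix}2&2\\c&d\end{pmatrix},\quad \begin{pmatrix}2&b\\2&d\end{pmatrix},\quad \begin{pmatrix}2&b\\c&0\end{pmatrix},\quad \begin{pmatrix}a&b\\0&0\end{pmatrix},\quad \begin{pmatrix}a&0\\c&0\end{pmatrix},$$ where $a,b,c,d\in\{0,1,2\}$.
   Context: A ternary matrix is a matrix with all entries in $\{0,1,2\}$. A ternary $m\times n$ matrix $M$ is a (strong) lonesum matrix if no other ternary $m\times n$ matrix has the same row sums and the same column sums as $M$. A $2\times 2$ submatrix is the matrix formed by the entries in the intersection of two chosen rows and two chosen columns. Two matrices are equivalent if one can be obtained from the other by permuting rows and permuting columns. *)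

From mathcomp Require Import all_boot all_order all_algebra all_fingroup.
Set Implicit Arguments.
Unset Strict Implicit.
Unset Printing Implicit Defensive.

Definition ternary (m n : nat) (M : 'M[nat]_(m, n)) : Prop :=
  forall i j, M i j <= 2.

Definition row_sum (m n : nat) (M : 'M[nat]_(m, n)) (i : 'I_m) : nat :=
  \sum_(j < n) M i j.
Definition col_sum (m n : nat) (M : 'M[nat]_(m, n)) (j : 'I_n) : nat :=
  \sum_(i < m) M i j.

Definition lonesum (m n : nat) (M : 'M[nat]_(m, n)) : Prop :=
  forall N : 'M[nat]_(m, n), ternary N ->
    (forall i, row_sum N i = row_sum M i) ->
    (forall j, col_sum N j = col_sum M j) -> N = M.

Definition submx2 (m n : nat) (M : 'M[nat]_(m, n)) (i1 i2 : 'I_m) (j1 j2 : 'I_n)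
  : 'M[nat]_2 :=
  \matrix_(k < 2, l < 2)
    M (if k == ord0 then i1 else i2) (if l == ord0 then j1 else j2).

Definition mx_equiv (m n : nat) (A B : 'M[nat]_(m, n)) : Prop :=
  exists (s : 'S_m) (t : 'S_n), B = row_perm s (col_perm t A).

Definition good_form (A : 'M[nat]_2) : Prop :=
  let i0 : 'I_2 := ord0 in let i1 : 'I_2 := ord_max in
  (A i0 i0 = 2 /\ A i0 i1 = 2) \/
  (A i0 i0 = 2 /\ A i1 i0 = 2) \/
  (A i0 i0 = 2 /\ A i1 i1 = 0) \/
  (A i1 i0 = 0 /\ A i1 i1 = 0) \/
  (A i0 i1 = 0 /\ A i1 i1 = 0).

From mathcomp Require Import all_boot all_order all_algebra all_fingroup.
Set Implicit Arguments. Unset Strict Implicit. Unset Printing Implicit Defensive.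

(* A switch at rows i1, i2 and columns j1, j2 is a position where one unit can be moved
   from the anti-diagonal (i1,j2), (i2,j1) to the diagonal (i1,j1), (i2,j2) without leaving
   {0,1,2}; this keeps all margins, so lonesum matrices are switch-free.  Conversely, let
   N <> M have the margins of M.  Equal row sums put, beside each entry with M < N, an
   entry with N < M in the same row, and equal column sums give the converse in columns;
   iterating yields a walk r0, d0, r1, d1, ..., r_k = r0, first returning to r0 at k, with
   N < M at (r_t, d_t) and M < N at (r_t+1, d_t).  When M is switch-free, each chord
   (r0, d_t), 0 < t < k, carries the value 2, by induction along the walk; this contradicts
   M < N <= 2 at the closing entry (r0, d_k-1).  Finally, a 2x2 submatrix is equivalent to
   one of the five forms exactly when neither of its diagonals carries a switch, a finite
   check. *)

Definition switch m n (M : 'M[nat]_(m, n)) i1 i2 j1 j2 : bool :=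
  [&& M i1 j1 < 2, M i2 j2 < 2, 0 < M i1 j2 & 0 < M i2 j1].

Definition switch_free m n (M : 'M[nat]_(m, n)) : Prop :=
  forall i1 i2 j1 j2, i1 != i2 -> j1 != j2 -> ~~ switch M i1 i2 j1 j2.

Lemma switchC m n (M : 'M[nat]_(m, n)) i1 i2 j1 j2 :
  switch M i1 i2 j1 j2 = switch M i2 i1 j2 j1.
Proof. by rewrite /switch; case: (M i1 j1 < 2); case: (M i2 j2 < 2); rewrite //= andbC. Qed.

Definition good_formb (a b c d : nat) : bool :=
  [|| (a == 2) && (b == 2), (a == 2) && (c == 2), (a == 2) && (d == 0),
      (c == 0) && (d == 0) | (b == 0) && (d == 0)].

Lemma good_formE (B : 'M[nat]_2) :
  good_form B <->
  good_formb (B ord0 ord0) (B ord0 ord_max) (B ord_max ord0) (B ord_max ord_max).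
Proof.
rewrite /good_form /good_formb; split.
  by case=> [[-> ->]|[[-> ->]|[[-> ->]|[[-> ->]|[-> ->]]]]]; rewrite ?orbT.
by case/or4P=> [||| /orP[]] /andP[/eqP-> /eqP->]; tauto.
Qed.

Lemma perm2 (s : 'S_2) : s = 1%g \/ s = tperm ord0 ord_max.
Proof.
have ord2 (i : 'I_2) : i = ord0 \/ i = ord_max.
  by case: i => [[|[|//]] ?]; [left | right]; apply: val_inj.
case: (ord2 (s ord0)) => s0; [left | right]; apply/permP => i;
  case: (ord2 i) => ->; rewrite ?perm1 ?tpermL ?tpermR //;
  case: (ord2 (s ord_max)) => // s1;
  by have /(congr1 val) := perm_inj (etrans s0 (esym s1)).
Qed.

(* [good_formb] on the four row/column permutations of the matrix [a b; c d]. *)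
Definition good_orbitb (a b c d : nat) : bool :=
  [|| good_formb a b c d, good_formb b a d c, good_formb c d a b | good_formb d c b a].

Lemma equiv_good_formE (A : 'M[nat]_2) :
  (exists B, mx_equiv A B /\ good_form B) <->
  good_orbitb (A ord0 ord0) (A ord0 ord_max) (A ord_max ord0) (A ord_max ord_max).
Proof.
pose swap : 'S_2 := tperm ord0 ord_max.
split.
  case=> B [[s [t ->]] /good_formE]; rewrite /good_orbitb !mxE.
  by case: (perm2 s) (perm2 t) => -> [] ->; rewrite ?perm1 ?tpermL ?tpermR => ->;
    rewrite ?orbT.
case/or4P=> good;
  [ exists (row_perm 1 (col_perm 1 A)) | exists (row_perm 1 (col_perm swap A))
  | exists (row_perm swap (col_perm 1 A)) | exists (row_perm swap (col_perm swap A)) ];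
  by split; [do 2!eexists | apply/good_formE; rewrite !mxE ?perm1 ?tpermL ?tpermR].
Qed.

Lemma good_orbitbE (a b c d : nat) : a <= 2 -> b <= 2 -> c <= 2 -> d <= 2 ->
  good_orbitb a b c d =
  ~~ [&& a < 2, d < 2, 0 < b & 0 < c] && ~~ [&& b < 2, c < 2, 0 < a & 0 < d].
Proof.
by case: a => [|[|[|//]]]; case: b => [|[|[|//]]]; case: c => [|[|[|//]]];
  case: d => [|[|[|//]]].
Qed.

Lemma submx2_good_formP m n (M : 'M[nat]_(m, n)) i1 i2 j1 j2 : ternary M ->
  (exists B, mx_equiv (submx2 M i1 i2 j1 j2) B /\ good_form B) <->
  ~~ switch M i1 i2 j1 j2 && ~~ switch M i1 i2 j2 j1.
Proof.
move=> tM; apply: iff_trans (equiv_good_formE _) _.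
by rewrite !mxE /= good_orbitbE ?tM.
Qed.

Lemma sum_trade n (F G : 'I_n -> nat) a b : a != b ->
  F a = (G a).+1 -> G b = (F b).+1 -> (forall j, j != a -> j != b -> F j = G j) ->
  \sum_j F j = \sum_j G j.
Proof.
move=> neab Fa Gb FG.
have split_ab H : \sum_j H j = H a + H b + \sum_(j | (j != a) && (j != b)) H j.
  by rewrite (bigD1 a) // (bigD1 b) 1?eq_sym //= addnA.
rewrite split_ab [RHS]split_ab Fa Gb addSn addnS.
by congr (_ + _).+1; apply: eq_bigr => j /andP[]; apply: FG.
Qed.

Section SwitchMove.

Variables (m n : nat) (M : 'M[nat]_(m, n)) (i1 i2 : 'I_m) (j1 j2 : 'I_n).
Hypotheses (nei : i1 != i2) (nej : j1 != j2).
Hypotheses (pos12 : 0 < M i1 j2) (pos21 : 0 < M i2 j1).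

Definition switch_move : 'M[nat]_(m, n) := \matrix_(i, j)
  if ((i == i1) && (j == j1)) || ((i == i2) && (j == j2)) then (M i j).+1
  else if ((i == i1) && (j == j2)) || ((i == i2) && (j == j1)) then (M i j).-1
  else M i j.

Let ni12 : (i1 == i2) = false. Proof. exact: negbTE. Qed.
Let ni21 : (i2 == i1) = false. Proof. by rewrite eq_sym ni12. Qed.
Let nj12 : (j1 == j2) = false. Proof. exact: negbTE. Qed.
Let nj21 : (j2 == j1) = false. Proof. by rewrite eq_sym nj12. Qed.

Lemma switch_move_out i j :
  ~~ (((i == i1) || (i == i2)) && ((j == j1) || (j == j2))) -> switch_move i j = M i j.
Proof.
by rewrite mxE; case: (i == i1); case: (i == i2); case: (j == j1); case: (j == j2).
Qed.

Lemma row_sum_switch_move i : row_sum switch_move i = row_sum M i.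
Proof.
rewrite /row_sum; have [->|ne1] := eqVneq i i1.
  apply: (sum_trade nej); rewrite ?mxE ?eqxx ?ni12 ?nj21 ?prednK //.
  by move=> j /negbTE nja /negbTE njb; apply: switch_move_out; rewrite nja njb andbF.
have [->|ne2] := eqVneq i i2.
  apply: (sum_trade (negbT nj21)); rewrite ?mxE ?eqxx ?ni21 ?nj12 ?orbT ?prednK //.
  by move=> j /negbTE nja /negbTE njb; apply: switch_move_out; rewrite nja njb andbF.
by apply: eq_bigr => j _; apply: switch_move_out; rewrite (negbTE ne1) (negbTE ne2).
Qed.

Lemma col_sum_switch_move j : col_sum switch_move j = col_sum M j.
Proof.
rewrite /col_sum; have [->|ne1] := eqVneq j j1.
  apply: (sum_trade nei); rewrite ?mxE ?eqxx ?nj12 ?ni21 ?orbT ?prednK //.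
  by move=> i /negbTE nia /negbTE nib; apply: switch_move_out; rewrite nia nib.
have [->|ne2] := eqVneq j j2.
  apply: (sum_trade (negbT ni21)); rewrite ?mxE ?eqxx ?nj21 ?ni12 ?orbT ?prednK //.
  by move=> i /negbTE nia /negbTE nib; apply: switch_move_out; rewrite nia nib.
by apply: eq_bigr => i _; apply: switch_move_out; rewrite (negbTE ne1) (negbTE ne2) andbF.
Qed.

End SwitchMove.

Lemma lonesum_switch_free m n (M : 'M[nat]_(m, n)) :
  ternary M -> lonesum M -> switch_free M.
Proof.
move=> tM lsM i1 i2 j1 j2 nei nej; apply/negP => /and4P[low11 low22 pos12 pos21].
have tN : ternary (switch_move M i1 i2 j1 j2).
  move=> i j; rewrite mxE; case: ifP => [/orP[] /andP[/eqP-> /eqP->] //|_].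
  by case: ifP => _; [apply: leq_trans (leq_pred _) (tM _ _) | apply: tM].
have /matrixP/(_ i1 j1) := lsM _ tN (row_sum_switch_move nei nej pos12 pos21)
  (col_sum_switch_move nei nej pos12 pos21).
by rewrite mxE !eqxx /= => /esym/n_Sn.
Qed.

Lemma sum_eq_lt_gt n (F G : 'I_n -> nat) j0 :
  \sum_j F j = \sum_j G j -> F j0 < G j0 -> exists j, G j < F j.
Proof.
move=> eqFG ltFG0; apply/existsP; apply: contraT => /existsPn noGtF.
have : \sum_j F j < \sum_j G j.
  rewrite (bigD1 j0) //= [X in _ < X](bigD1 j0) //= -addSn leq_add //.
  by apply: leq_sum => j _; rewrite leqNgt noGtF.
by rewrite eqFG ltnn.
Qed.

Lemma iter_first_return (T : finType) (h : T -> T) x : exists a k,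
  [/\ 0 < k, iter k h (iter a h x) = iter a h x
    & forall t, 0 < t < k -> iter t h (iter a h x) != iter a h x].
Proof.
have /trajectP[a lt_a ret] := looping_order h x.
have returns : exists k, (0 < k) && (iter k h (iter a h x) == iter a h x).
  by exists (fingraph.order h x - a); rewrite subn_gt0 lt_a -iterD subnK 1?ltnW // ret /=.
have [k /andP[k_gt0 /eqP ret_k] min_k] := ex_minnP returns.
exists a, k; split=> // t /andP[t_gt0 lt_tk]; apply: contraL lt_tk => ret_t.
by rewrite -leqNgt min_k ?t_gt0.
Qed.

Section AlternatingCycle.

Variables (m n : nat) (M N : 'M[nat]_(m, n)).
Hypotheses (swfM : switch_free M) (tN : ternary N).

Lemma switch_free_chord i0 i j j' : i0 != i -> j != j' ->
  0 < M i0 j -> M i j < 2 -> 0 < M i j' -> 1 < M i0 j'.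
Proof.
move=> nei nej pos0 low pos; rewrite eq_sym in nei.
by have := swfM nei nej; rewrite /switch low pos pos0 !andbT -leqNgt.
Qed.

Variables (r : nat -> 'I_m) (d : nat -> 'I_n) (k : nat).
Hypotheses (k_gt0 : 0 < k) (r_ret : r k = r 0)
  (r_first : forall t, 0 < t < k -> r t != r 0).
Hypotheses (down : forall t, N (r t) (d t) < M (r t) (d t))
  (up : forall t, M (r t.+1) (d t) < N (r t.+1) (d t)).

Lemma alternating_cycle_chords t : 0 < t < k -> 1 < M (r 0) (d t).
Proof.
elim: t => // t IH /andP[_ lt_tk].
have pos : 0 < M (r 0) (d t).
  case: t IH lt_tk => [_ _ | t IH lt_tk]; first exact: leq_ltn_trans (down 0).
  by apply: ltnW; apply: IH; exact: ltnW lt_tk.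
apply: (switch_free_chord _ _ pos (leq_trans (up t) (tN _ _))
  (leq_ltn_trans _ (down t.+1))) => //.
- by rewrite eq_sym r_first.
- apply/eqP => same_col; have := up t; rewrite same_col ltnNge.
  by rewrite ltnW // down.
Qed.

Lemma alternating_cycle_false : False.
Proof.
have := up k.-1; rewrite prednK // r_ret.
have [k1 | k_gt1] := leqP k 1.
  have -> : k.-1 = 0 by rewrite (@anti_leq k 1) // k1 k_gt0.
  by rewrite ltnNge ltnW // down.
rewrite ltnNge (leq_trans (tN _ _)) //; apply: alternating_cycle_chords.
by rewrite -subn1 subn_gt0 k_gt1 /= subn1 prednK.
Qed.

End AlternatingCycle.

Section Margins.

Variables (m n : nat) (M N : 'M[nat]_(m, n)).
Hypotheses (row_eq : forall i, row_sum N i = row_sum M i)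
  (col_eq : forall j, col_sum N j = col_sum M j).

Lemma row_balance i j : M i j < N i j -> exists j', N i j' < M i j'.
Proof. exact: sum_eq_lt_gt (esym (row_eq i)). Qed.

Lemma col_balance i j : N i j < M i j -> exists i', M i' j < N i' j.
Proof. exact: sum_eq_lt_gt (col_eq j). Qed.

End Margins.

Lemma switch_free_lonesum m n (M : 'M[nat]_(m, n)) : switch_free M -> lonesum M.
Proof.
move=> swfM N tN row_eq col_eq.
suff N_le_M i j : N i j <= M i j.
  apply/matrixP => i j; apply/eqP; rewrite eqn_leq N_le_M leqNgt.
  by apply/negP => /(col_balance col_eq)[i']; rewrite ltnNge N_le_M.
rewrite leqNgt; apply/negP => up0.
pose g i := odflt j [pick j' | N i j' < M i j'].
pose f j' := odflt i [pick i' | M i' j' < N i' j'].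
have g_down i' j' : M i' j' < N i' j' -> N i' (g i') < M i' (g i').
  move=> /(row_balance row_eq)[j'' lt]; rewrite /g.
  by case: pickP => // /(_ j''); rewrite lt.
have f_up i' j' : N i' j' < M i' j' -> M (f j') j' < N (f j') j'.
  move=> /(col_balance col_eq)[i'' lt]; rewrite /f.
  by case: pickP => // /(_ i''); rewrite lt.
pose h i' := f (g i').
have orbit_down t : N (iter t h i) (g (iter t h i)) < M (iter t h i) (g (iter t h i)).
  elim: t => [|t IH]; first exact: g_down up0.
  by rewrite iterS; apply: g_down (f_up _ _ IH).
have [a [k [k_gt0 ret first]]] := iter_first_return h i.
apply: (@alternating_cycle_false _ _ M N swfM tN
  (fun t => iter t h (iter a h i)) (fun t => g (iter t h (iter a h i))) k) => // t.
- by rewrite -iterD orbit_down.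
- by rewrite iterS -iterD; apply: f_up; apply: orbit_down.
Qed.

Lemma switch_free_ordered m n (M : 'M[nat]_(m, n)) :
  (forall (i1 i2 : 'I_m) (j1 j2 : 'I_n), i1 < i2 -> j1 < j2 ->
     ~~ switch M i1 i2 j1 j2 && ~~ switch M i1 i2 j2 j1) ->
  switch_free M.
Proof.
move=> ordered i1 i2 j1 j2.
wlog lt_i : i1 i2 j1 j2 / i1 < i2.
  move=> wlog nei nej; case: (ltngtP i1 i2) => [lt_i | lt_i | /val_inj eq_i].
  - exact: wlog.
  - by rewrite switchC wlog // eq_sym.
  - by rewrite eq_i eqxx in nei.
move=> _ nej; case: (ltngtP j1 j2) => [lt_j | lt_j | /val_inj eq_j].
- by case/andP: (ordered _ _ _ _ lt_i lt_j).
- by case/andP: (ordered _ _ _ _ lt_i lt_j).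
- by rewrite eq_j eqxx in nej.
Qed.

Theorem theorem3p1 (m n : nat) (M : 'M[nat]_(m, n)) :
  ternary M ->
  (lonesum M <->
   (forall (i1 i2 : 'I_m) (j1 j2 : 'I_n), i1 < i2 -> j1 < j2 ->
      exists B : 'M[nat]_2, mx_equiv (submx2 M i1 i2 j1 j2) B /\ good_form B)).
Proof.
move=> tM; split=> [lsM i1 i2 j1 j2 lt_i lt_j | ordered].
  have nei : i1 != i2 by apply: contraTneq lt_i => ->; rewrite ltnn.
  have nej : j1 != j2 by apply: contraTneq lt_j => ->; rewrite ltnn.
  by apply/submx2_good_formP => //; rewrite !(lonesum_switch_free tM lsM) // eq_sym.
apply/switch_free_lonesum/switch_free_ordered => i1 i2 j1 j2 lt_i lt_j.
exact/(submx2_good_formP _ _ _ _ tM)/ordered.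
Qed.
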